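(* Consider an instance of the Generalized Data Placement (GDP) problem and its associated weighted bipartite graph $H$ (both defined in the context). Then (1) given any feasible solution to GDP, there is a partition of $H$ whose edge cost is no greater than the cost of that feasible solution; and (2) given any partition of $H$, there is a feasible solution to GDP of cost at most the edge cost of that partition. In particular, the optimal value of GDP equals the minimum edge cost of a partition of $H$.
   Context: Generalized Data Placement (GDP). An instance consists of: $n$ views $V_1,\dots,V_n$, view $V_j$ having nonnegative integer size $t_j$; $l$ servers $S_1,\dots,S_l$, server $S_k$ having nonnegative integer storage capacity $s_k$; a nonnegative integer transfer cost $m_j$ for each view $V_j$; a directed acyclic graph $K=(V,E)$ on $V=\{V_1,\dots,V_n\}$ (an arc $(V_i,V_j)$ means view $V_i$ needs view $V_j$); and for each arc $(V_i,V_j)\in E$ a nonnegative integer communication cost $C_i^j$. A feasible solution assigns to each view $V_j$ a computation server $cs(V_j)\in\{S_1,\dots,S_l\}$ and a storage server $ss(V_j)\in\{S_1,\dots,S_l\}$ such that for all $k$, $\sum_{i: ss(V_i)=S_k} t_i\le s_k$. Its cost is $\sum_{(V_i,V_j)\in E:\ ss(V_j)\neq cs(V_i)} C_i^j+\sum_{i:\ cs(V_i)\neq ss(V_i)} m_i$; the goal is to minimize this cost. The graph $H$. Let $V'=\{V'_1,\dots,V'_n\}$ be a disjoint copy of $V$. $H$ is the bipartite graph with vertex set $V\cup V'$ and edge set $\{\{V_j,V'_i\}: (V_i,V_j)\in E\}\cup\{\{V_i,V'_i\}: i=1,\dots,n\}$. The weight of an edge $\{V_j,V'_i\}$ with $j\neq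 i$ is $C_i^j$; the weight of an edge $\{V_i,V'_i\}$ is $m_i$. Node $V_j$ has weight $t_j$ and node $V'_j$ has weight $0$. A partition of $H$ means an ordered partition $(P_1,\dots,P_l)$ of $V\cup V'$ into $l$ parts (equivalently a map from $V\cup V'$ to $\{1,\dots,l\}$) such that the total node weight of $P_k$ is at most $s_k$ for each $k$. Its edge cost is the total weight of edges of $H$ whose endpoints lie in different parts. *)

From mathcomp Require Import all_boot.
Set Implicit Arguments. Unset Strict Implicit. Unset Printing Implicit Defensive.

(* Views V_1..V_n are indexed by 'I_n, servers S_1..S_l by 'I_l.
   The DAG K is given by the arc relation E : rel 'I_n
   (E i j means arc (V_i, V_j), i.e. V_i needs V_j).
   C i j is the communication cost C_i^j of arc (V_i,V_j). *)

Definition acyclic_rel (n : nat) (E : rel 'I_n) : Prop :=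
  forall i j : 'I_n, E i j -> ~~ connect E j i.

Definition gdp_feasible (n l : nat) (t : 'I_n -> nat) (s : 'I_l -> nat)
  (cs ss : 'I_n -> 'I_l) : Prop :=
  forall k : 'I_l, \sum_(i < n | ss i == k) t i <= s k.

Definition gdp_cost (n l : nat) (m : 'I_n -> nat) (E : rel 'I_n)
  (C : 'I_n -> 'I_n -> nat) (cs ss : 'I_n -> 'I_l) : nat :=
  \sum_(p : 'I_n * 'I_n | E p.1 p.2 && (ss p.2 != cs p.1)) C p.1 p.2
  + \sum_(i < n | cs i != ss i) m i.

(* The bipartite graph H on V ∪ V'.  Vertices: inl j = V_j, inr i = V'_i. *)
Definition H_vertex (n : nat) : finType := ('I_n + 'I_n)%type.

(* Edges of H: the pair (j, i) stands for the edge {V_j, V'_i}; it is an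
   edge iff (V_i, V_j) ∈ E or i = j. *)
Definition H_edge (n : nat) (E : rel 'I_n) (e : 'I_n * 'I_n) : bool :=
  E e.2 e.1 || (e.1 == e.2).

Definition H_edge_weight (n : nat) (m : 'I_n -> nat) (C : 'I_n -> 'I_n -> nat)
  (e : 'I_n * 'I_n) : nat :=
  if e.1 == e.2 then m e.2 else C e.2 e.1.

Definition H_node_weight (n : nat) (t : 'I_n -> nat) (v : H_vertex n) : nat :=
  match v with inl j => t j | inr _ => 0 end.

Definition H_partition (n l : nat) (t : 'I_n -> nat) (s : 'I_l -> nat)
  (P : H_vertex n -> 'I_l) : Prop :=
  forall k : 'I_l, \sum_(v : H_vertex n | P v == k) H_node_weight t v <= s k.

Definition H_edge_cost (n l : nat) (m : 'I_n -> nat) (E : rel 'I_n)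
  (C : 'I_n -> 'I_n -> nat) (P : H_vertex n -> 'I_l) : nat :=
  \sum_(e : 'I_n * 'I_n | H_edge E e && (P (inl e.1) != P (inr e.2)))
     H_edge_weight m C e.

From mathcomp Require Import all_boot.

Set Implicit Arguments.
Unset Strict Implicit.
Unset Printing Implicit Defensive.

(* A GDP solution (cs, ss) and a partition P of H are the same data: V_j is
   placed on its storage server ss j and V'_i on its computation server cs i.
   Under this correspondence capacities match because the V'_i weigh nothing,
   and the cut edges of H are exactly the arcs and transfers GDP pays for, the
   edges {V_i, V'_i} being distinct from the arc edges since K has no loops. *)

Definition placement_partition (n l : nat) (cs ss : 'I_n -> 'I_l) :
  H_vertex n -> 'I_l :=
  fun v => match v with inl j => ss j | inr i => cs i end.

Lemma acyclic_rel_irreflexive (n : nat) (E : rel 'I_n) :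
  acyclic_rel E -> irreflexive E.
Proof. by move=> hE i; apply/negP => Eii; have := hE i i Eii; rewrite connect0. Qed.

Lemma sum_pair (I J : finType) (F : I * J -> nat) :
  \sum_(p : I * J) F p = \sum_(i : I) \sum_(j : J) F (i, j).
Proof. by rewrite pair_big; apply: eq_bigr => -[]. Qed.

Lemma H_partition_gdp_feasible (n l : nat) (t : 'I_n -> nat) (s : 'I_l -> nat)
  (P : H_vertex n -> 'I_l) :
  H_partition t s P <-> gdp_feasible t s (fun i => P (inr i)) (fun j => P (inl j)).
Proof.
have part_weight k : \sum_(v : H_vertex n | P v == k) H_node_weight t v
                     = \sum_(j < n | P (inl j) == k) t j.
  by rewrite /H_vertex big_sumType /= big1_eq addn0.
by split=> h k; have := h k; rewrite part_weight.
Qed.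

Lemma H_edge_cost_gdp_cost (n l : nat) (m : 'I_n -> nat) (E : rel 'I_n)
  (C : 'I_n -> 'I_n -> nat) (P : H_vertex n -> 'I_l) :
  irreflexive E ->
  H_edge_cost m E C P = gdp_cost m E C (fun i => P (inr i)) (fun j => P (inl j)).
Proof.
move=> irrE; rewrite /H_edge_cost /gdp_cost.
rewrite big_mkcond sum_pair [X in _ = X + _]big_mkcond sum_pair.
rewrite [X in _ = _ + X]big_mkcond -big_split /= exchange_big /=.
apply: eq_bigr => i _.
rewrite (bigD1 i) //= (bigD1 i (P := xpredT)) //=.
rewrite /H_edge /H_edge_weight /= eqxx orbT irrE /= add0n eq_sym addnC.
by congr (_ + _); apply: eq_bigr => j /negbTE ->; rewrite orbF.
Qed.

Theorem theorem2 (n l : nat) (t : 'I_n -> nat) (s : 'I_l -> nat)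
  (m : 'I_n -> nat) (E : rel 'I_n) (C : 'I_n -> 'I_n -> nat)
  (hE : acyclic_rel E) :
  (forall cs ss : 'I_n -> 'I_l, gdp_feasible t s cs ss ->
     exists P : H_vertex n -> 'I_l,
       H_partition t s P /\ H_edge_cost m E C P <= gdp_cost m E C cs ss) /\
  (forall P : H_vertex n -> 'I_l, H_partition t s P ->
     exists cs ss : 'I_n -> 'I_l,
       gdp_feasible t s cs ss /\ gdp_cost m E C cs ss <= H_edge_cost m E C P) /\
  (forall c : nat,
     (exists cs ss : 'I_n -> 'I_l, gdp_feasible t s cs ss /\
        gdp_cost m E C cs ss = c /\
        (forall cs' ss' : 'I_n -> 'I_l, gdp_feasible t s cs' ss' ->
           c <= gdp_cost m E C cs' ss'))
     <->
     (exists P : H_vertex n -> 'I_l, H_partition t s P /\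
        H_edge_cost m E C P = c /\
        (forall P' : H_vertex n -> 'I_l, H_partition t s P' ->
           c <= H_edge_cost m E C P'))).
Proof.
have irrE := acyclic_rel_irreflexive hE.
have feas := H_partition_gdp_feasible t s.
have cost P := H_edge_cost_gdp_cost m C P irrE.
pose mk := @placement_partition n l.
have feas_mk cs ss : gdp_feasible t s cs ss -> H_partition t s (mk cs ss).
  by move=> h; apply/feas.
split; [|split].
- by move=> cs ss h; exists (mk cs ss); rewrite cost; split; first exact: feas_mk.
- by move=> P hP; exists (P \o inr), (P \o inl); rewrite cost; split; first exact/feas.
- move=> c; split.
  + move=> [cs [ss [h [<- min_c]]]]; exists (mk cs ss); rewrite cost.
    do !split=> //; first exact: feas_mk.
    by move=> P' /feas hP'; rewrite cost; apply: min_c.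
  + move=> [P [hP [<- min_c]]]; exists (P \o inr), (P \o inl); rewrite cost.
    do !split=> //; first exact/feas.
    by move=> cs' ss' /feas_mk /min_c; rewrite !cost.
Qed.
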